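(* In the standing setup (with an arbitrary nonempty finite set of fluids), for every $t_{\mathrm b}\in I$ and every $t\in I$ with $t\ge t_{\mathrm b}$, $$|x(t)|\le |x(t_{\mathrm b})|+\sqrt{2}\,c\,l\,(t-t_{\mathrm b}).$$
   Context: Standing setup. Fix real constants $c>0$ and $l>0$, a nonempty finite index set $A$, and constants $w_\alpha\in[-1,1]$ for $\alpha\in A$. Let $I\subseteq\mathbb{R}$ be an interval and let $x,y_{\mathrm r},y_{\mathrm i},h,z_\alpha$ ($\alpha\in A$) be real $C^1$ functions of $t\in I$ with $h>0$ and $z_\alpha\ge 0$. Define $\xi(t)=x(t)^2+\sum_{\beta\in A}\frac{1+w_\beta}{2}z_\beta(t)^2$. Assume that on $I$: $\dot x=\big[-x+4c\,y_{\mathrm r}y_{\mathrm i}+x\,\xi\big]h$, $\dot y_{\mathrm r}=\big[\xi\,y_{\mathrm r}-c\,x\,y_{\mathrm i}\big]h$, $\dot y_{\mathrm i}=\big[\xi\,y_{\mathrm i}+c\,x\,y_{\mathrm r}\big]h$, $\dot z_\alpha=\big[-\tfrac{1+w_\alpha}{2}+\xi\big]z_\alpha h$, $\dot h=-\xi h^2$, together with the constraints $x^2+4y_{\mathrm r}^2+\sum_{\beta\in A}z_\beta^2=1$ and $y_{\mathrm r}^2+y_{\mathrm i}^2=\frac{l^2}{2h^2}$. (This autonomous system is equivalent to FLRW cosmology of a canonical scalar with potential $m^2f^2(1-\cos(\phi/f))$ coupled to perfect fluids with state parameters $w_\alpha$; there $h=(d-1)H$, $\xi=\epsilon/(d-1)$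 with $\epsilon=-\dot H/H^2$, and $cl=m/\sqrt2$.) *)

From Stdlib Require Import Reals.
Open Scope R_scope.

Definition is_interval (I : R -> Prop) : Prop :=
  forall a b s, I a -> I b -> a <= s <= b -> I s.

(* f is differentiable relative to I at every point of I, with derivative f'
   (one-sided at endpoints that belong to I). *)
Definition has_deriv_on (I : R -> Prop) (f f' : R -> R) : Prop :=
  forall t, I t ->
    forall eps, 0 < eps -> exists del, 0 < del /\
      forall s, I s -> s <> t -> Rabs (s - t) < del ->
        Rabs ((f s - f t) / (s - t) - f' t) < eps.

Definition cont_on (I : R -> Prop) (f : R -> R) : Prop :=
  forall t, I t ->
    forall eps, 0 < eps -> exists del, 0 < del /\
      forall s, I s -> Rabs (s - t) < del -> Rabs (f s - f t) < eps.

Definition C1_on (I : R -> Prop) (f f' : R -> R) : Prop :=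
  has_deriv_on I f f' /\ cont_on I f'.

Fixpoint fsum (n : nat) (g : nat -> R) : R :=
  match n with
  | O => 0
  | S m => fsum m g + g m
  end.

(* The constraints bound the source terms of the x-equation: the second constraint
   gives (yi h)^2 <= l^2/2 and the first gives yr^2 <= 1/4 and xi <= 1, so
   x' = -x (1 - xi) h + 4 c yr yi h, whose first term pushes x towards 0 and whose
   second term is at most sqrt 2 c l in absolute value.  Hence |x| can grow at most
   at rate sqrt 2 c l, which is made rigorous by a comparison (barrier) argument,
   applied to x and to -x. *)

From Stdlib Require Import Reals Lra Lia Psatz Classical.
Open Scope R_scope.

Lemma has_deriv_on_cont_on I g g' : has_deriv_on I g g' -> cont_on I g.
Proof.
  intros Hd s Hs e He.
  destruct (Hd s Hs 1 Rlt_0_1) as [del [Hdel Hq]].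
  set (M := Rabs (g' s) + 1).
  assert (HM : 0 < M) by (unfold M; pose proof (Rabs_pos (g' s)); lra).
  exists (Rmin del (e / M)). split.
  { apply Rmin_glb_lt; [lra | apply Rdiv_lt_0_compat; lra]. }
  intros v Hv Hvs.
  destruct (Req_dec v s) as [-> | Hne].
  { replace (g s - g s) with 0 by ring. rewrite Rabs_R0; lra. }
  assert (Hdel' : Rabs (v - s) < del) by (eapply Rlt_le_trans; [exact Hvs | apply Rmin_l]).
  assert (HeM : Rabs (v - s) < e / M) by (eapply Rlt_le_trans; [exact Hvs | apply Rmin_r]).
  specialize (Hq v Hv Hne Hdel').
  set (q := (g v - g s) / (v - s)) in *.
  assert (Hq_bound : Rabs q < M).
  { replace q with ((q - g' s) + g' s) by ring.
    eapply Rle_lt_trans; [apply Rabs_triang |]. unfold M; lra. }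
  replace (g v - g s) with (q * (v - s)) by (unfold q; field; lra).
  rewrite Rabs_mult.
  apply Rle_lt_trans with (M * Rabs (v - s)).
  { apply Rmult_le_compat_r; [apply Rabs_pos | lra]. }
  replace e with (M * (e / M)) by (field; lra).
  apply Rmult_lt_compat_l; lra.
Qed.

Lemma has_deriv_on_slope_upper I g g' s e :
  has_deriv_on I g g' -> I s -> 0 < e ->
  exists d, 0 < d /\ forall v, I v -> s < v < s + d -> g v < g s + (g' s + e) * (v - s).
Proof.
  intros Hd Hs He.
  destruct (Hd s Hs e He) as [del [Hdel Hq]].
  exists del. split; [exact Hdel |]. intros v Hv Hvs.
  assert (Hvs' : Rabs (v - s) < del) by (rewrite Rabs_right; lra).
  destruct (Rabs_def2 _ _ (Hq v Hv ltac:(lra) Hvs')) as [Hlt _].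
  set (q := (g v - g s) / (v - s)) in *.
  replace (g v) with (g s + q * (v - s)) by (unfold q; field; lra).
  apply Rplus_lt_compat_l, Rmult_lt_compat_r; lra.
Qed.

Lemma has_deriv_on_opp I g g' :
  has_deriv_on I g g' -> has_deriv_on I (fun t => - g t) (fun t => - g' t).
Proof.
  intros Hd t Ht eps He. destruct (Hd t Ht eps He) as [d [Hdpos Hq]].
  exists d; split; [exact Hdpos |]. intros s Hs Hne Hst.
  replace ((- g s - - g t) / (s - t) - - g' t) with (- ((g s - g t) / (s - t) - g' t))
    by (field; lra).
  rewrite Rabs_Ropp. auto.
Qed.

Lemma real_induction (P : R -> Prop) a b :
  P a ->
  (forall s, a < s <= b -> (forall v, a <= v < s -> P v) -> P s) ->
  (forall s, a <= s < b -> (forall v, a <= v <= s -> P v) ->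
     exists d, 0 < d /\ forall v, s < v < s + d -> P v) ->
  forall v, a <= v <= b -> P v.
Proof.
  intros Pa Hclosed Hopen v Hv.
  set (E := fun u => a <= u <= b /\ forall v, a <= v <= u -> P v).
  assert (Ea : E a).
  { split; [lra |]. intros u Hu. replace u with a by lra. exact Pa. }
  assert (Hbound : bound E) by (exists b; intros u [Hu _]; lra).
  destruct (completeness E Hbound (ex_intro _ a Ea)) as [s [Hub Hlub]].
  assert (Has : a <= s) by (apply Hub; exact Ea).
  assert (Hsb : s <= b) by (apply Hlub; intros u [Hu _]; lra).
  assert (Pbelow : forall u, a <= u < s -> P u).
  { intros u Hu. apply NNPP. intros HnP.
    assert (s <= u); [| lra].
    apply Hlub. intros u' [Hu' Hgood].
    destruct (Rle_dec u' u) as [| Hgt]; [assumption |].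
    exfalso. apply HnP, Hgood. lra. }
  assert (Pupto : forall u, a <= u <= s -> P u).
  { intros u Hu. destruct (Req_dec u s) as [-> | Hne]; [| apply Pbelow; lra].
    destruct (Req_dec s a) as [-> | Hsa]; [exact Pa |].
    apply Hclosed; [lra | exact Pbelow]. }
  assert (Hs_eq_b : s = b).
  { apply Rle_antisym; [exact Hsb |]. apply Rnot_lt_le. intros Hlt.
    destruct (Hopen s ltac:(lra) Pupto) as [d [Hd Hright]].
    set (u := Rmin b (s + d / 2)).
    assert (Hu_b : u <= b) by apply Rmin_l.
    assert (Hu_d : u <= s + d / 2) by apply Rmin_r.
    assert (Hu_s : s < u) by (unfold u; apply Rmin_glb_lt; lra).
    assert (Eu : E u).
    { split; [lra |]. intros u' Hu'.
      destruct (Rle_dec u' s); [apply Pupto; lra | apply Hright; lra]. }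
    specialize (Hub u Eu). lra. }
  apply Pupto. lra.
Qed.

Section Barrier.

Variables (I : R -> Prop) (g g' : R -> R) (a b C K : R).
Hypotheses (HI : is_interval I) (Hg : has_deriv_on I g g') (Ia : I a) (Ib : I b)
  (HK : 0 <= K) (Hga : g a <= C)
  (Hslope : forall u, a <= u <= b -> C + K * (u - a) < g u -> g' u <= K).

Lemma upper_barrier_eps e :
  0 < e -> forall v, a <= v <= b -> g v <= C + (K + e) * (v - a) + e.
Proof.
  intros He.
  assert (Iab : forall v, a <= v <= b -> I v) by (intros v Hv; exact (HI a b v Ia Ib Hv)).
  set (B := fun v => C + (K + e) * (v - a) + e).
  assert (B_mono : forall u v, u <= v -> B u <= B v).
  { intros u v Huv. unfold B.
    assert ((K + e) * (u - a) <= (K + e) * (v - a)) by (apply Rmult_le_compat_l; lra).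
    lra. }
  apply (real_induction (fun v => g v <= B v)).
  - unfold B. lra.
  - intros s Hs Pbelow. apply Rnot_lt_le. intros Hgs.
    destruct (has_deriv_on_cont_on I g g' Hg s (Iab s ltac:(lra)) (g s - B s))
      as [d [Hd Hcont]]; [lra |].
    set (v := Rmax a (s - d / 2)).
    assert (Hva : a <= v) by apply Rmax_l.
    assert (Hvd : s - d / 2 <= v) by apply Rmax_r.
    assert (Hvs : v < s) by (unfold v; apply Rmax_lub_lt; lra).
    specialize (Hcont v (Iab v ltac:(lra)) ltac:(rewrite Rabs_left; lra)).
    destruct (Rabs_def2 _ _ Hcont) as [_ Hclose].
    specialize (Pbelow v ltac:(lra)). specialize (B_mono v s ltac:(lra)). lra.
  - intros s Hs Pupto.
    assert (Is : I s) by (apply Iab; lra).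
    assert (Hnear : exists d, 0 < d /\ forall v, I v -> s < v < s + d -> g v <= B v).
    { destruct (Rlt_le_dec (C + K * (s - a)) (g s)) as [Habove | Hbelow].
      - specialize (Hslope s ltac:(lra) Habove).
        destruct (has_deriv_on_slope_upper I g g' s e Hg Is He) as [d [Hd Hup]].
        exists d. split; [exact Hd |]. intros v Iv Hv.
        specialize (Hup v Iv Hv). specialize (Pupto s ltac:(lra)).
        assert ((g' s + e) * (v - s) <= (K + e) * (v - s)) by (apply Rmult_le_compat_r; lra).
        unfold B in *. nra.
      - destruct (has_deriv_on_cont_on I g g' Hg s Is e He) as [d [Hd Hcont]].
        exists d. split; [exact Hd |]. intros v Iv Hv.
        specialize (Hcont v Iv ltac:(rewrite Rabs_right; lra)).
        destruct (Rabs_def2 _ _ Hcont) as [Hclose _].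
        assert (0 <= (K + e) * (v - s)) by (apply Rmult_le_pos; lra).
        unfold B. nra. }
    destruct Hnear as [d [Hd Hnear]].
    exists (Rmin d (b - s)). split; [apply Rmin_glb_lt; lra |].
    intros v Hv.
    assert (Hvd : v < s + d) by (pose proof (Rmin_l d (b - s)); lra).
    assert (Hvb : v < b) by (pose proof (Rmin_r d (b - s)); lra).
    apply Hnear; [apply Iab |]; lra.
Qed.

Lemma upper_barrier : a <= b -> g b <= C + K * (b - a).
Proof.
  intros Hab. apply Rle_plus_epsilon. intros eps Heps.
  set (e := eps / (b - a + 1)).
  assert (He : 0 < e) by (unfold e; apply Rdiv_lt_0_compat; lra).
  assert (Hbound := upper_barrier_eps e He b ltac:(lra)).
  replace eps with (e * (b - a) + e) by (unfold e; field; lra).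
  lra.
Qed.

End Barrier.

Lemma fsum_le n f g : (forall b, (b < n)%nat -> f b <= g b) -> fsum n f <= fsum n g.
Proof.
  induction n as [| n IH]; simpl; intros Hfg; [lra |].
  apply Rplus_le_compat; [apply IH; intros; apply Hfg; lia | apply Hfg; lia].
Qed.

Lemma fsum_nonneg n f : (forall b, (b < n)%nat -> 0 <= f b) -> 0 <= fsum n f.
Proof.
  induction n as [| n IH]; simpl; intros Hf; [lra |].
  apply Rplus_le_le_0_compat; [apply IH; intros; apply Hf; lia | apply Hf; lia].
Qed.

Lemma constraint_yr_sq_le n xu yru (zu : nat -> R) :
  xu ^ 2 + 4 * yru ^ 2 + fsum n (fun b => zu b ^ 2) = 1 -> yru ^ 2 <= 1 / 4.
Proof.
  intros Hcon.
  assert (0 <= fsum n (fun b => zu b ^ 2)) by (apply fsum_nonneg; intros; apply pow2_ge_0).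
  pose proof (pow2_ge_0 xu). lra.
Qed.

Lemma constraint_xi_le_1 n (w : nat -> R) xu yru (zu : nat -> R) :
  (forall b, (b < n)%nat -> -1 <= w b <= 1) ->
  xu ^ 2 + 4 * yru ^ 2 + fsum n (fun b => zu b ^ 2) = 1 ->
  xu ^ 2 + fsum n (fun b => (1 + w b) / 2 * zu b ^ 2) <= 1.
Proof.
  intros Hw Hcon.
  assert (fsum n (fun b => (1 + w b) / 2 * zu b ^ 2) <= fsum n (fun b => zu b ^ 2)).
  { apply fsum_le. intros b Hb. specialize (Hw b Hb).
    pose proof (pow2_ge_0 (zu b)). nra. }
  pose proof (pow2_ge_0 yru). lra.
Qed.

Lemma cross_term_bound c l yr yi h :
  0 <= c -> 0 <= l -> 0 < h -> yr ^ 2 <= 1 / 4 ->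
  yr ^ 2 + yi ^ 2 = l ^ 2 / (2 * h ^ 2) ->
  Rabs (4 * c * yr * yi * h) <= sqrt 2 * c * l.
Proof.
  intros Hc Hl Hh Hyr Hcy.
  assert (Hsqrt2 : sqrt 2 * sqrt 2 = 2) by (apply sqrt_sqrt; lra).
  assert (HK : 0 <= sqrt 2 * c * l).
  { apply Rmult_le_pos; [apply Rmult_le_pos; [apply sqrt_pos |] |]; lra. }
  assert (Hyih : yi ^ 2 * h ^ 2 <= l ^ 2 / 2).
  { replace (l ^ 2 / 2) with (l ^ 2 / (2 * h ^ 2) * h ^ 2) by (field; lra).
    apply Rmult_le_compat_r; [apply pow2_ge_0 |].
    pose proof (pow2_ge_0 yr). lra. }
  rewrite <- (Rabs_right (sqrt 2 * c * l)) by lra.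
  apply Rsqr_le_abs_0. unfold Rsqr.
  assert (yr ^ 2 * (yi ^ 2 * h ^ 2) <= 1 / 4 * (l ^ 2 / 2)).
  { apply Rmult_le_compat; [apply pow2_ge_0 | apply Rmult_le_pos; apply pow2_ge_0 | lra | lra]. }
  pose proof (pow2_ge_0 c).
  replace (sqrt 2 * c * l * (sqrt 2 * c * l)) with ((sqrt 2 * sqrt 2) * c ^ 2 * l ^ 2) by ring.
  rewrite Hsqrt2. nra.
Qed.

(* The damping term -x (1 - xi) h never increases a nonnegative x. *)
Lemma damped_rate_le xu q xiu hu K :
  0 <= xu -> xiu <= 1 -> 0 < hu -> Rabs (q * hu) <= K ->
  (- xu + q + xu * xiu) * hu <= K.
Proof.
  intros Hx Hxi Hh Hq.
  pose proof (Rle_abs (q * hu)).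
  assert (0 <= xu * (1 - xiu) * hu) by (apply Rmult_le_pos; [apply Rmult_le_pos |]; lra).
  nra.
Qed.

Theorem lemma1
  (c l : R) (n : nat) (w : nat -> R) (I : R -> Prop)
  (x yr yi h : R -> R) (z : nat -> R -> R)
  (x' yr' yi' h' : R -> R) (z' : nat -> R -> R) :
  0 < c -> 0 < l -> (0 < n)%nat ->
  (forall a, (a < n)%nat -> -1 <= w a <= 1) ->
  is_interval I ->
  C1_on I x x' -> C1_on I yr yr' -> C1_on I yi yi' -> C1_on I h h' ->
  (forall a, (a < n)%nat -> C1_on I (z a) (z' a)) ->
  (forall t, I t -> 0 < h t) ->
  (forall a t, (a < n)%nat -> I t -> 0 <= z a t) ->
  let xi := fun t => x t ^ 2 + fsum n (fun b => (1 + w b) / 2 * z b t ^ 2) in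
  (forall t, I t -> x' t = (- x t + 4 * c * yr t * yi t + x t * xi t) * h t) ->
  (forall t, I t -> yr' t = (xi t * yr t - c * x t * yi t) * h t) ->
  (forall t, I t -> yi' t = (xi t * yi t + c * x t * yr t) * h t) ->
  (forall a t, (a < n)%nat -> I t ->
      z' a t = (- ((1 + w a) / 2) + xi t) * z a t * h t) ->
  (forall t, I t -> h' t = - xi t * h t ^ 2) ->
  (forall t, I t -> x t ^ 2 + 4 * yr t ^ 2 + fsum n (fun b => z b t ^ 2) = 1) ->
  (forall t, I t -> yr t ^ 2 + yi t ^ 2 = l ^ 2 / (2 * h t ^ 2)) ->
  forall tb t, I tb -> I t -> tb <= t ->
    Rabs (x t) <= Rabs (x tb) + sqrt 2 * c * l * (t - tb).
Proof.
  intros Hc Hl _ Hw HI [Hdx _] _ _ _ _ Hh _ xi Hx' _ _ _ _ Hcon Hcy tb t Itb It Htbt.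
  set (K := sqrt 2 * c * l).
  assert (HK : 0 <= K).
  { apply Rmult_le_pos; [apply Rmult_le_pos; [apply sqrt_pos |] |]; lra. }
  assert (Hxi : forall u, I u -> xi u <= 1).
  { intros u Iu. exact (constraint_xi_le_1 n w _ _ _ Hw (Hcon u Iu)). }
  assert (Hcross : forall u, I u -> Rabs (4 * c * yr u * yi u * h u) <= K).
  { intros u Iu. apply cross_term_bound; try lra; auto.
    exact (constraint_yr_sq_le n _ _ _ (Hcon u Iu)). }
  assert (Hcomparison : forall g g', has_deriv_on I g g' ->
     (forall u, I u -> 0 <= g u -> g' u <= K) -> g tb <= Rabs (x tb) ->
     g t <= Rabs (x tb) + K * (t - tb)).
  { intros g g' Hg Hrate Hgtb.
    apply (upper_barrier I g g' tb t (Rabs (x tb)) K HI Hg Itb It HK Hgtb); [| exact Htbt].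
    intros u Hu Habove. apply Hrate; [exact (HI tb t u Itb It Hu) |].
    pose proof (Rabs_pos (x tb)). nra. }
  assert (Hx_le : x t <= Rabs (x tb) + K * (t - tb)).
  { apply (Hcomparison x x' Hdx); [| apply Rle_abs].
    intros u Iu Hxu. rewrite (Hx' u Iu).
    apply damped_rate_le; auto. }
  assert (Hoppx_le : - x t <= Rabs (x tb) + K * (t - tb)).
  { apply (Hcomparison _ _ (has_deriv_on_opp I x x' Hdx));
      [| rewrite <- Rabs_Ropp; apply Rle_abs].
    intros u Iu Hxu. rewrite (Hx' u Iu).
    replace (- ((- x u + 4 * c * yr u * yi u + x u * xi u) * h u))
      with ((- (- x u) + - (4 * c * yr u * yi u) + - x u * xi u) * h u) by ring.
    apply damped_rate_le; auto.
    rewrite Ropp_mult_distr_l_reverse, Rabs_Ropp. exact (Hcross u Iu). }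
  unfold Rabs at 1. destruct (Rcase_abs (x t)); lra.
Qed.
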